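(* Consider the problem of steering $\dot x=Ax+u b$, $|u(t)|\le1$, from $(0,0,0)$ to $(\gamma,0,\gamma)$ in minimum time, where $$A=\begin{pmatrix}0&1&0\\-1&0&1\\0&0&0\end{pmatrix},\qquad b=(0,0,1)^T,\qquad \gamma>0.$$ (i) If $2(\rho-1)\pi<\gamma<2\rho\pi$ for some integer $\rho\ge1$, the unique optimal control has exactly $2\rho$ switchings and is $$u(t)=(-1)^{j-1},\quad t_{j-1}<t<t_j,\quad j=1,\dots,2\rho+1,$$ with $t_0=0$, where the interval lengths $\tau_j=t_j-t_{j-1}$ satisfy: $\tau_1=\tau_{2\rho+1}=\tau$, where $\tau\in(0,\pi)$ is the unique solution in $(0,\pi)$ of $$\frac{2\tau+2(\rho-1)\pi-\gamma}{2\rho-1}=2\tan^{-1}\!\Big(\frac{\sin\tau}{2\rho-\cos\tau}\Big)$$ (with $\tan^{-1}$ taking values in $(-\pi/2,\pi/2)$); $$\tau_{2k}=\frac{2\tau+2(\rho-1)\pi-\gamma}{2\rho-1},\quad k=1,\dots,\rho;\qquad \tau_{2k+1}=2\pi-\tau_{2k+2}=\frac{2\rho\pi-2\tau+\gamma}{2\rho-1},\quad k=1,\dots,\rho-1.$$ The minimum transfer time is $$t_{2\rho+1}=\frac{4\rho[\tau+(\rho-1)\pi]-\gamma}{2\rho-1}.$$ (ii) If $\gamma=2\rho\pi$ for some integer $\rho\ge1$, the optimal control is $u(t)\equiv1$ and the minimum time is $2\rho\pi$.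
   Context: Controls are measurable functions with values in $[-1,1]$; the terminal time is free. *)

From Stdlib Require Import Reals Lra Lia Arith.
Open Scope R_scope.

(* System x' = A x + u b with A = [[0,1,0],[-1,0,1],[0,0,0]], b = (0,0,1)^T:
     x1' = x2,  x2' = -x1 + x3,  x3' = u,  |u| <= 1, u measurable.
   Since no Lebesgue theory is available, an admissible (Caratheodory)
   trajectory starting at (0,0,0) is encoded as: x3 is 1-Lipschitz
   (equivalently x3 is absolutely continuous with x3' = u a.e., |u| <= 1,
   u measurable), and x1, x2 satisfy their (continuous right-hand side)
   equations classically.  Trajectories are defined on all of R (any control
   on [0,T] extends, e.g. by u = 0). *)
Definition traj (x1 x2 x3 : R -> R) : Prop :=
  x1 0 = 0 /\ x2 0 = 0 /\ x3 0 = 0 /\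
  (forall s t : R, Rabs (x3 t - x3 s) <= Rabs (t - s)) /\
  (forall t : R, derivable_pt_lim x1 t (x2 t)) /\
  (forall t : R, derivable_pt_lim x2 t (- x1 t + x3 t)).

Definition reaches (g T : R) (x1 x2 x3 : R -> R) : Prop :=
  0 <= T /\ x1 T = g /\ x2 T = 0 /\ x3 T = g.

Definition control_on (x3 : R -> R) (a b c : R) : Prop :=
  forall t : R, a < t < b -> derivable_pt_lim x3 t c.

Definition tau_even (rho : nat) (g tau : R) : R :=
  (2 * tau + 2 * (INR rho - 1) * PI - g) / (2 * INR rho - 1).
Definition tau_odd (rho : nat) (g tau : R) : R :=
  (2 * INR rho * PI - 2 * tau + g) / (2 * INR rho - 1).

Definition tauj (rho : nat) (g tau : R) (j : nat) : R :=
  if orb (Nat.eqb j 1) (Nat.eqb j (2 * rho + 1)) then tau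
  else if Nat.even j then tau_even rho g tau else tau_odd rho g tau.

Fixpoint tsw (rho : nat) (g tau : R) (j : nat) : R :=
  match j with
  | O => 0
  | S k => tsw rho g tau k + tauj rho g tau (S k)
  end.

Definition tau_eq (rho : nat) (g tau : R) : Prop :=
  tau_even rho g tau = 2 * atan (sin tau / (2 * INR rho - cos tau)).

From Stdlib Require Import Reals Lra Lia Arith.
From Coquelicot Require Import Coquelicot.
Open Scope R_scope.

(* The candidate X is the response to the bang-bang control whose sign is the
   switching function cos (tau_e / 2) - cos (t - theta), theta = tau + tau_e / 2,
   the last component of an adjoint vector p solving p' = - A^T p; the equation
   for tau is exactly what makes X end at (g, 0, g) at time Tmin.  For every
   admissible x and delay d, the pairing of p (t) with x (t - d) - X (t) is
   nonincreasing on [0, Tmin], because the control of X maximizes p3 u.  If x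
   reached the target at T < Tmin, the delay d = Tmin - T would give pairing 0
   at Tmin but a negative pairing at d, where the delayed trajectory is still
   at rest while X has already moved.  If x reaches it at Tmin, the pairing
   vanishes at both ends, hence is constant, which forces the control of x to
   be that of X.  For g = 2 rho pi the bound |x3 (T)| <= T suffices. *)

Lemma derivable_pt_lim_eq_value (f : R -> R) (x l l' : R) :
  derivable_pt_lim f x l -> l = l' -> derivable_pt_lim f x l'.
Proof. intros H <-; exact H. Qed.

Lemma derivable_pt_lim_glue (f g1 g2 : R -> R) (c l : R) :
  (forall t, t <= c -> f t = g1 t) -> (forall t, c <= t -> f t = g2 t) ->
  derivable_pt_lim g1 c l -> derivable_pt_lim g2 c l ->
  derivable_pt_lim f c l.
Proof.
  intros H1 H2 D1 D2 eps Heps.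
  destruct (D1 eps Heps) as [d1 Hd1], (D2 eps Heps) as [d2 Hd2].
  assert (Hm : 0 < Rmin d1 d2) by (apply Rmin_pos; apply cond_pos).
  exists (mkposreal _ Hm); intros h Hh0 Hh; simpl in Hh.
  destruct (Rle_dec h 0).
  - rewrite (H1 (c + h)), (H1 c) by lra.
    apply Hd1; auto. apply Rlt_le_trans with (1 := Hh), Rmin_l.
  - rewrite (H2 (c + h)), (H2 c) by lra.
    apply Hd2; auto. apply Rlt_le_trans with (1 := Hh), Rmin_r.
Qed.

Lemma derivable_pt_lim_affine_near (f : R -> R) (a b c u : R) :
  a < c < b -> (forall t, a < t < b -> f t = f c + u * (t - c)) ->
  derivable_pt_lim f c u.
Proof.
  intros Hc Hf.
  apply (derivable_pt_lim_locally_ext (fun t => f c + u * (t - c)) f c a b);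
    [lra | intros t Ht; symmetry; auto |].
  apply is_derive_Reals; auto_derive; [easy | ring].
Qed.

Lemma derivable_pt_lim_shift (f : R -> R) (c t l : R) :
  derivable_pt_lim f (t - c) l -> derivable_pt_lim (fun s => f (s - c)) t l.
Proof.
  intros H; apply is_derive_Reals in H; apply is_derive_Reals.
  replace l with (1 * l) by ring.
  apply (is_derive_comp f (fun s => s - c)); [exact H | auto_derive; [easy | ring]].
Qed.

Lemma cos_lipschitz x y : Rabs (cos x - cos y) <= Rabs (x - y).
Proof.
  destruct (MVT_abs cos (fun t => - sin t) y x) as [c [Hc _]].
  { intros; apply derivable_pt_lim_cos. }
  rewrite Hc, Rabs_Ropp.
  assert (Hs : Rabs (sin c) <= 1) by apply Rabs_le, SIN_bound.
  assert (0 <= Rabs (x - y)) by apply Rabs_pos.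
  nra.
Qed.

Lemma cos_2PI_minus v : cos (2 * PI - v) = cos v.
Proof. rewrite <- (cos_neg v), <- (cos_period (- v) 1); f_equal; simpl; ring. Qed.

Lemma cos_minus_period x k : cos (x - 2 * INR k * PI) = cos x.
Proof. rewrite <- (cos_period _ k); f_equal; ring. Qed.

Lemma sin_minus_period x k : sin (x - 2 * INR k * PI) = sin x.
Proof. rewrite <- (sin_period _ k); f_equal; ring. Qed.

Lemma cos_le_between a v : 0 < a < PI -> a <= v <= 2 * PI - a -> cos v <= cos a.
Proof.
  intros Ha Hv; destruct (Rle_or_lt v PI).
  - destruct (Req_dec a v) as [<- | ]; [lra |].
    left; apply cos_decreasing_1; lra.
  - rewrite <- cos_2PI_minus.
    destruct (Req_dec a (2 * PI - v)) as [<- | ]; [lra |].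
    left; apply cos_decreasing_1; lra.
Qed.

Lemma cos_lt_between a v : 0 < a < PI -> a < v < 2 * PI - a -> cos v < cos a.
Proof.
  intros Ha Hv; destruct (Rle_or_lt v PI).
  - apply cos_decreasing_1; lra.
  - rewrite <- cos_2PI_minus; apply cos_decreasing_1; lra.
Qed.

Lemma cos_Rabs w : cos (Rabs w) = cos w.
Proof. unfold Rabs; destruct Rcase_abs; [apply cos_neg | reflexivity]. Qed.

Lemma cos_ge_of_Rabs_le a w : 0 < a < PI -> Rabs w <= a -> cos a <= cos w.
Proof.
  intros Ha Hw; rewrite <- (cos_Rabs w).
  assert (0 <= Rabs w) by apply Rabs_pos.
  destruct (Req_dec (Rabs w) a) as [-> | ]; [lra |].
  left; apply cos_decreasing_1; lra.
Qed.

Lemma cos_gt_of_Rabs_lt a w : 0 < a < PI -> Rabs w < a -> cos a < cos w.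
Proof.
  intros Ha Hw; rewrite <- (cos_Rabs w).
  assert (0 <= Rabs w) by apply Rabs_pos.
  apply cos_decreasing_1; lra.
Qed.

Lemma pow_m1_cases n : (-1) ^ n = 1 \/ (-1) ^ n = -1.
Proof.
  induction n as [| n [E | E]]; simpl; [left | right | left]; rewrite ?E; ring.
Qed.

Section QuadraticSteps.
Variables (f : R -> R) (a b C : R).
Hypothesis step : forall t h, a <= t -> 0 < h -> t + h <= b -> f (t + h) - f t <= C * h * h.

Lemma uniform_steps_bound n : a <= b -> (0 < n)%nat ->
  f b - f a <= C * (b - a) * (b - a) / INR n.
Proof.
  intros Hab Hn; assert (HnR : 0 < INR n) by (apply lt_0_INR; lia).
  set (h := (b - a) / INR n).
  assert (Hh : 0 <= h) by (apply Rmult_le_pos; [lra | left; apply Rinv_0_lt_compat; lra]).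
  assert (Hk : forall k, (k <= n)%nat -> f (a + INR k * h) - f a <= INR k * (C * h * h)).
  { induction k as [| k IH]; intros Hk; [simpl INR; rewrite !Rmult_0_l, Rplus_0_r; lra |].
    assert (Hkn : INR k + 1 <= INR n) by (rewrite <- S_INR; apply le_INR; lia).
    assert (Hend : a + INR k * h + h <= b).
    { replace b with (a + INR n * h) by (unfold h; field; lra). clearbody h. nra. }
    destruct (Req_dec h 0) as [E | Hh0].
    - rewrite E, !Rmult_0_r, Rplus_0_r; lra.
    - assert (Hs := step (a + INR k * h) h ltac:(pose proof (pos_INR k); nra) ltac:(lra) Hend).
      rewrite S_INR; replace (a + (INR k + 1) * h) with (a + INR k * h + h) by ring.
      specialize (IH ltac:(lia)); lra. }
  specialize (Hk n (le_n n)).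
  replace (a + INR n * h) with b in Hk by (unfold h; field; lra).
  replace (INR n * (C * h * h)) with (C * (b - a) * (b - a) / INR n) in Hk
    by (unfold h; field; lra).
  exact Hk.
Qed.

Lemma nonincreasing_of_quadratic_steps : a <= b -> 0 <= C -> f b <= f a.
Proof.
  intros Hab HC; destruct (Rle_or_lt (f b) (f a)) as [| Hlt]; [assumption | exfalso].
  set (K := C * (b - a) * (b - a)).
  assert (HK : 0 <= K) by (unfold K; apply Rmult_le_pos; [apply Rmult_le_pos |]; lra).
  destruct (archimed_cor1 ((f b - f a) / (K + 1))) as [n [Hn Hn0]].
  { apply Rdiv_lt_0_compat; lra. }
  assert (HnR : 0 < INR n) by (apply lt_0_INR; lia).
  assert (Hb := uniform_steps_bound n Hab Hn0); fold K in Hb.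
  apply (Rmult_lt_compat_l (K + 1)) in Hn; [| lra].
  replace ((K + 1) * ((f b - f a) / (K + 1))) with (f b - f a) in Hn by (field; lra).
  assert (K / INR n <= (K + 1) * / INR n); [| lra].
  apply Rmult_le_compat_r; [left; apply Rinv_0_lt_compat |]; lra.
Qed.
End QuadraticSteps.

(* Formally (Q + s y)' = P y - P y + s y' = s y' <= 0.  Since y is merely
   Lipschitz, each small step is estimated by the mean value theorem applied to
   Q + s y(t + h) with y(t + h) frozen. *)
Lemma nonincreasing_Q_plus_s_y (Q s P y : R -> R) (a b K L : R) :
  a <= b -> 0 <= K -> 0 <= L ->
  (forall t, a <= t <= b -> derivable_pt_lim Q t (P t * y t)) ->
  (forall t, a <= t <= b -> derivable_pt_lim s t (- P t)) ->
  (forall t, a <= t <= b -> Rabs (P t) <= K) ->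
  (forall t t', a <= t <= b -> a <= t' <= b -> Rabs (y t' - y t) <= L * Rabs (t' - t)) ->
  (forall t h, a <= t -> 0 < h -> t + h <= b -> s t * (y (t + h) - y t) <= 0) ->
  Q b + s b * y b <= Q a + s a * y a.
Proof.
  intros Hab HK HL HQ Hs HP Hy Hstep.
  apply (nonincreasing_of_quadratic_steps (fun t => Q t + s t * y t) a b (K * L));
    [| assumption | apply Rmult_le_pos; assumption].
  intros t h Ht Hh Hth.
  destruct (MVT_cor2 (fun r => Q r + s r * y (t + h)) (fun r => P r * (y r - y (t + h)))
              t (t + h) ltac:(lra)) as [c [Hc Hcin]].
  { intros c Hc. replace (P c * (y c - y (t + h))) with (P c * y c + - P c * y (t + h)) by ring.
    apply derivable_pt_lim_plus; [apply HQ; lra |].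
    apply derivable_pt_lim_scal_right, Hs; lra. }
  assert (Hb : Rabs (P c * (y c - y (t + h))) <= K * (L * h)).
  { rewrite Rabs_mult, Rabs_minus_sym.
    apply Rmult_le_compat; try apply Rabs_pos; [apply HP; lra |].
    apply Rle_trans with (L * Rabs (t + h - c)); [apply Hy; lra |].
    rewrite Rabs_right by lra. apply Rmult_le_compat_l; lra. }
  apply Rabs_le_between in Hb.
  assert (HS := Hstep t h Ht Hh Hth).
  replace (t + h - t) with h in Hc by ring.
  assert (P c * (y c - y (t + h)) * h <= K * (L * h) * h) by (apply Rmult_le_compat_r; lra).
  nra.
Qed.

Lemma derivable_pt_lim_comp_Rmax0 (F F' : R -> R) s :
  (forall x, derivable_pt_lim F x (F' x)) -> F' 0 = 0 ->
  derivable_pt_lim (fun s => F (Rmax 0 s)) s (F' (Rmax 0 s)).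
Proof.
  intros HF H0; destruct (Rtotal_order s 0) as [Hs | [-> | Hs]].
  - rewrite Rmax_left, H0 by lra.
    apply (derivable_pt_lim_locally_ext (fun _ => F 0) _ s (s - 1) 0);
      [lra | intros; rewrite Rmax_left by lra; reflexivity | apply derivable_pt_lim_const].
  - rewrite Rmax_left, H0 by lra.
    apply (derivable_pt_lim_glue _ (fun _ => F 0) F).
    + intros; rewrite Rmax_left by lra; reflexivity.
    + intros; rewrite Rmax_right by lra; reflexivity.
    + apply derivable_pt_lim_const.
    + rewrite <- H0 at 2; apply HF.
  - rewrite Rmax_right by lra.
    apply (derivable_pt_lim_locally_ext F _ s 0 (s + 1));
      [lra | intros; rewrite Rmax_right by lra; reflexivity | apply HF].
Qed.

(* The state at time s of the system started at rest under the control
   u = 1 switched on at time 0. *)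
Definition resp3 (s : R) : R := Rmax 0 s.
Definition resp1 (s : R) : R := resp3 s - sin (resp3 s).
Definition resp2 (s : R) : R := 1 - cos (resp3 s).

Lemma resp1_deriv s : derivable_pt_lim resp1 s (resp2 s).
Proof.
  apply (derivable_pt_lim_comp_Rmax0 (fun x => x - sin x) (fun x => 1 - cos x));
    [intros x | rewrite cos_0; ring].
  apply is_derive_Reals; auto_derive; [easy | ring].
Qed.

Lemma resp2_deriv s : derivable_pt_lim resp2 s (resp3 s - resp1 s).
Proof.
  unfold resp1; replace (resp3 s - (resp3 s - sin (resp3 s))) with (sin (resp3 s)) by ring.
  apply (derivable_pt_lim_comp_Rmax0 (fun x => 1 - cos x) sin); [intros x | apply sin_0].
  apply is_derive_Reals; auto_derive; [easy | ring].
Qed.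

Lemma one_lipschitz_extend_affine (f : R -> R) (c e : R) :
  (forall s t, s <= c -> t <= c -> Rabs (f t - f s) <= Rabs (t - s)) ->
  (forall t, c <= t -> f t = f c + e * (t - c)) -> Rabs e <= 1 ->
  forall s t, Rabs (f t - f s) <= Rabs (t - s).
Proof.
  intros Hleft Hright He.
  assert (Hr : forall s t, c <= s -> c <= t -> Rabs (f t - f s) <= Rabs (t - s)).
  { intros s t Hs Ht; rewrite (Hright s), (Hright t) by assumption.
    replace (f c + e * (t - c) - (f c + e * (s - c))) with (e * (t - s)) by ring.
    rewrite Rabs_mult; pose proof (Rabs_pos (t - s)); nra. }
  assert (Hlr : forall s t, s <= c <= t -> Rabs (f t - f s) <= Rabs (t - s)).
  { intros s t Hst.
    replace (f t - f s) with ((f t - f c) + (f c - f s)) by ring.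
    eapply Rle_trans; [apply Rabs_triang |].
    pose proof (Hr c t ltac:(lra) ltac:(lra)) as A; pose proof (Hleft s c ltac:(lra) ltac:(lra)) as B.
    rewrite (Rabs_right (t - c)) in A by lra; rewrite (Rabs_right (c - s)) in B by lra.
    rewrite (Rabs_right (t - s)) by lra; lra. }
  intros s t; destruct (Rle_or_lt s c), (Rle_or_lt t c).
  - auto.
  - apply Hlr; lra.
  - rewrite Rabs_minus_sym, (Rabs_minus_sym t); apply Hlr; lra.
  - apply Hr; lra.
Qed.

(* Response to the bang-bang control that starts with u = 1 at time 0 and
   changes sign at ts 1 <= ts 2 <= ...: each switch adds twice a delayed step
   response. *)
Section Superposition.
Variable ts : nat -> R.
Hypothesis ts_0 : ts 0%nat = 0.
Hypothesis ts_S : forall k, ts k <= ts (S k).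

Fixpoint superpose (F : R -> R) (n : nat) (t : R) : R :=
  match n with
  | O => F t
  | S k => superpose F k t + 2 * (-1) ^ S k * F (t - ts (S k))
  end.

Lemma ts_le k k' : (k <= k')%nat -> ts k <= ts k'.
Proof. induction 1; [lra | eapply Rle_trans; eauto]. Qed.

Lemma ts_ge0 k : 0 <= ts k.
Proof. rewrite <- ts_0; apply ts_le; lia. Qed.

Lemma superpose_deriv F G n t :
  (forall x, derivable_pt_lim F x (G x)) ->
  derivable_pt_lim (superpose F n) t (superpose G n t).
Proof.
  intros HF; induction n as [| n IH]; simpl; [apply HF |].
  apply derivable_pt_lim_plus; [exact IH |].
  apply derivable_pt_lim_scal, derivable_pt_lim_shift, HF.
Qed.

Lemma superpose_ext F G n t :
  (forall x, t - ts n <= x <= t -> F x = G x) -> superpose F n t = superpose G n t.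
Proof.
  revert F G; induction n as [| n IH]; intros F G H; simpl.
  - rewrite ts_0 in H; apply H; lra.
  - pose proof (ts_S n); pose proof (ts_ge0 (S n)).
    rewrite (IH F G), H; [reflexivity | lra | intros x Hx; apply H; lra].
Qed.

Lemma superpose_minus F G n t :
  superpose (fun x => F x - G x) n t = superpose F n t - superpose G n t.
Proof. induction n as [| n IH]; simpl; rewrite ?IH; ring. Qed.

Lemma superpose_const c n t : superpose (fun _ => c) n t = (-1) ^ n * c.
Proof. induction n as [| n IH]; simpl; rewrite ?IH; ring. Qed.

Lemma superpose_id_slope n t t' :
  superpose (fun x => x) n t - superpose (fun x => x) n t' = (-1) ^ n * (t - t').
Proof. induction n as [| n IH]; simpl; [ring |]; rewrite <- (Rmult_1_l (t - t')) at 1; nra. Qed.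

Lemma superpose_vanish_before F n m t :
  (forall x, x <= 0 -> F x = 0) -> (m <= n)%nat -> t <= ts (S m) ->
  superpose F n t = superpose F m t.
Proof.
  intros HF; induction 1 as [| n Hmn IH]; intros Ht; [reflexivity | simpl].
  rewrite IH, HF by (try pose proof (ts_le (S m) (S n) ltac:(lia)); lra). ring.
Qed.

Lemma superpose_at0 F n : (forall x, x <= 0 -> F x = 0) -> superpose F n 0 = 0.
Proof.
  intros HF; rewrite (superpose_ext F (fun _ => 0)), superpose_const; [ring |].
  intros x Hx; apply HF; lra.
Qed.

Lemma superpose_resp3_after n t :
  ts n <= t -> superpose resp3 n t = superpose resp3 n (ts n) + (-1) ^ n * (t - ts n).
Proof.
  intros Ht; assert (Hid : forall u, ts n <= u ->
    superpose resp3 n u = superpose (fun x => x) n u).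
  { intros u Hu; apply superpose_ext; intros x Hx; apply Rmax_right; lra. }
  rewrite !Hid by lra; rewrite <- (superpose_id_slope n t (ts n)); ring.
Qed.

Lemma superpose_resp_after n t : ts n <= t ->
  superpose resp1 n t = superpose (fun x => x) n t - superpose sin n t /\
  superpose resp2 n t = (-1) ^ n - superpose cos n t /\
  superpose resp3 n t = superpose (fun x => x) n t.
Proof.
  intros Ht; assert (Hpos : forall x, t - ts n <= x <= t -> resp3 x = x)
    by (intros; apply Rmax_right; lra).
  repeat split.
  - rewrite <- superpose_minus; apply superpose_ext; intros x Hx.
    unfold resp1; rewrite Hpos; auto.
  - rewrite <- (Rmult_1_r ((-1) ^ n)), <- (superpose_const 1 n t), <- superpose_minus.
    apply superpose_ext; intros x Hx; unfold resp2; rewrite Hpos; auto.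
  - apply superpose_ext; auto.
Qed.

Lemma superpose_resp3_on_piece N i t : (i <= N)%nat -> ts i <= t <= ts (S i) ->
  superpose resp3 N t = superpose resp3 N (ts i) + (-1) ^ i * (t - ts i).
Proof.
  intros HiN Ht; pose proof (ts_S i).
  assert (Hv : forall x, x <= 0 -> resp3 x = 0) by (intros; apply Rmax_left; lra).
  rewrite !(superpose_vanish_before resp3 N i) by (auto; lra).
  apply superpose_resp3_after; lra.
Qed.

Lemma superpose_resp3_lipschitz n s t :
  Rabs (superpose resp3 n t - superpose resp3 n s) <= Rabs (t - s).
Proof.
  revert s t; induction n as [| n IH].
  - apply (one_lipschitz_extend_affine resp3 0 1); [| | rewrite Rabs_R1; lra].
    + intros s t Hs Ht; unfold resp3; rewrite !Rmax_left, Rminus_diag, Rabs_R0 by lra.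
      apply Rabs_pos.
    + intros t Ht; unfold resp3; rewrite !Rmax_right by lra; ring.
  - apply (one_lipschitz_extend_affine _ (ts (S n)) ((-1) ^ S n));
      [| apply superpose_resp3_after | rewrite pow_1_abs; lra].
    intros s t Hs Ht.
    assert (Hv : forall x, x <= 0 -> resp3 x = 0) by (intros; apply Rmax_left; lra).
    rewrite !(superpose_vanish_before resp3 (S n) n) by auto. apply IH.
Qed.

Lemma nonincreasing_across_pieces (F : R -> R) N :
  (forall i, (i <= N)%nat -> forall a b, ts i <= a -> a <= b -> b <= ts (S i) -> F b <= F a) ->
  forall a b, 0 <= a -> a <= b -> b <= ts (S N) -> F b <= F a.
Proof.
  induction N as [| N IH]; intros H a b Ha Hab Hb; [apply (H 0%nat); auto; lra |].
  assert (IH' : forall a b, 0 <= a -> a <= b -> b <= ts (S N) -> F b <= F a)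
    by (apply IH; intros i Hi; apply H; lia).
  destruct (Rle_or_lt b (ts (S N))), (Rle_or_lt (ts (S N)) a); auto.
  - apply (H (S N)); auto; lra.
  - apply Rle_trans with (F (ts (S N))); [apply (H (S N)) | apply IH']; auto; lra.
Qed.
End Superposition.

Lemma INR_ge1 n : (1 <= n)%nat -> 1 <= INR n.
Proof. intros; apply (le_INR 1); assumption. Qed.

Section TauEquation.
Variables (rho : nat) (g : R).
Hypothesis rho_ge1 : (1 <= rho)%nat.

Definition tau_gap (t : R) : R :=
  tau_even rho g t - 2 * atan (sin t / (2 * INR rho - cos t)).

Definition tau_gap' (t : R) : R :=
  2 / (2 * INR rho - 1)
  - 2 * (2 * INR rho * cos t - 1) / (4 * INR rho ^ 2 - 4 * INR rho * cos t + 1).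

Lemma tau_gap_deriv t : derivable_pt_lim tau_gap t (tau_gap' t).
Proof.
  pose proof (INR_ge1 rho rho_ge1); pose proof (COS_bound t).
  pose proof (sin2_cos2 t) as Hsc; unfold Rsqr in Hsc.
  apply is_derive_Reals; unfold tau_gap, tau_gap', tau_even; auto_derive; [lra |].
  assert (0 < 4 * INR rho ^ 2 - 4 * INR rho * cos t + 1) by nra.
  field_simplify_eq; try lra.
  replace (sin t ^ 2) with (1 - cos t ^ 2) by nra; ring.
Qed.

Lemma tau_gap'_pos t : 0 < t < PI -> 0 < tau_gap' t.
Proof.
  intros Ht; pose proof (INR_ge1 rho rho_ge1); pose proof (COS_bound t).
  assert (Hc : cos t < 1) by (rewrite <- cos_0; apply cos_decreasing_1; lra).
  set (N := 4 * INR rho ^ 2 - 4 * INR rho * cos t + 1).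
  assert (HN : 0 < N) by (unfold N; nra).
  replace (tau_gap' t) with
    (2 * ((4 * INR rho ^ 2 + 2 * INR rho) * (1 - cos t)) / ((2 * INR rho - 1) * N))
    by (unfold tau_gap', N in *; field; lra).
  apply Rdiv_lt_0_compat; [| apply Rmult_lt_0_compat; lra].
  assert (0 < INR rho ^ 2) by (apply pow_lt; lra).
  apply Rmult_lt_0_compat; [lra | apply Rmult_lt_0_compat; lra].
Qed.

Lemma tau_gap_increasing x y : 0 <= x -> x < y -> y <= PI -> tau_gap x < tau_gap y.
Proof.
  intros Hx Hxy Hy.
  destruct (MVT_cor2 tau_gap tau_gap' x y Hxy) as [c [Hc Hcin]];
    [intros; apply tau_gap_deriv |].
  pose proof (tau_gap'_pos c ltac:(lra)); nra.
Qed.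

Lemma tau_exists_unique : 2 * (INR rho - 1) * PI < g < 2 * INR rho * PI ->
  exists tau : R, 0 < tau < PI /\ tau_eq rho g tau /\
    (forall tau', 0 < tau' < PI -> tau_eq rho g tau' -> tau' = tau).
Proof.
  intros Hg; pose proof (INR_ge1 rho rho_ge1); pose proof PI_RGT_0.
  assert (Hroot : forall t, tau_eq rho g t <-> tau_gap t = 0)
    by (intros; unfold tau_eq, tau_gap; split; intros; lra).
  assert (Hend : forall t, sin t = 0 -> tau_gap t = tau_even rho g t).
  { intros t Hs; unfold tau_gap; rewrite Hs, Rdiv_0_l, atan_0; ring. }
  assert (Hcont : continuity tau_gap).
  { intros x; apply derivable_continuous_pt; exists (tau_gap' x); apply tau_gap_deriv. }
  assert (Hat0 : tau_gap 0 < 0).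
  { rewrite Hend by apply sin_0; unfold tau_even; apply Rdiv_neg_pos; lra. }
  assert (HatPI : 0 < tau_gap PI).
  { rewrite Hend by apply sin_PI; unfold tau_even; apply Rdiv_lt_0_compat; lra. }
  destruct (IVT tau_gap 0 PI Hcont ltac:(lra) Hat0 HatPI) as [z [Hz Hgz]].
  assert (z <> 0) by (intros ->; lra); assert (z <> PI) by (intros ->; lra).
  exists z; split; [lra |]; split; [apply Hroot; exact Hgz |].
  intros t' Ht' Heq'; apply Hroot in Heq'.
  destruct (Rtotal_order t' z) as [Hl | [Hl | Hl]]; [| exact Hl |].
  - pose proof (tau_gap_increasing t' z); lra.
  - pose proof (tau_gap_increasing z t'); lra.
Qed.
End TauEquation.

Lemma zero_traj : traj (fun _ => 0) (fun _ => 0) (fun _ => 0).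
Proof.
  unfold traj; repeat split; intros.
  - rewrite Rminus_diag, Rabs_R0; apply Rabs_pos.
  - apply derivable_pt_lim_const.
  - replace (- 0 + 0) with 0 by ring; apply derivable_pt_lim_const.
Qed.

Section OptimalControl.
Variables (rho : nat) (g tau : R).
Hypothesis rho_ge1 : (1 <= rho)%nat.
Hypothesis tau_range : 0 < tau < PI.
Hypothesis tau_root : tau_eq rho g tau.

Let r_ge1 : 1 <= INR rho := INR_ge1 rho rho_ge1.

Definition tau_e : R := tau_even rho g tau.
Definition alpha : R := sin tau / (2 * INR rho - cos tau).

Lemma alpha_pos : 0 < alpha.
Proof.
  pose proof (COS_bound tau).
  apply Rdiv_lt_0_compat; [apply sin_gt_0 |]; lra.
Qed.

Lemma tau_e_range : 0 < tau_e < PI.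
Proof.
  unfold tau_e; rewrite tau_root; fold alpha.
  pose proof (atan_increasing 0 alpha alpha_pos); rewrite atan_0 in *.
  pose proof (atan_bound alpha); lra.
Qed.

Lemma tau_odd_eq : tau_odd rho g tau = 2 * PI - tau_e.
Proof. unfold tau_e, tau_odd, tau_even; field; lra. Qed.

Lemma tauj_pos j : 0 < tauj rho g tau j.
Proof.
  pose proof tau_e_range; pose proof tau_odd_eq; unfold tauj.
  destruct (_ || _)%bool; [lra |]; destruct (Nat.even j); fold tau_e; lra.
Qed.

Lemma tsw_lt_succ k : tsw rho g tau k < tsw rho g tau (S k).
Proof. simpl; pose proof (tauj_pos (S k)); lra. Qed.

Lemma tauj_even k : (k < rho)%nat -> tauj rho g tau (2 * k + 2) = tau_e.
Proof.
  intros Hk; unfold tauj.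
  rewrite (proj2 (Nat.eqb_neq _ 1)), (proj2 (Nat.eqb_neq _ (2 * rho + 1))) by lia.
  replace (2 * k + 2)%nat with (2 * (k + 1))%nat by lia; rewrite Nat.even_even; reflexivity.
Qed.

Lemma tauj_odd k : (1 <= k < rho)%nat -> tauj rho g tau (2 * k + 1) = 2 * PI - tau_e.
Proof.
  intros Hk; unfold tauj.
  rewrite (proj2 (Nat.eqb_neq _ 1)), (proj2 (Nat.eqb_neq _ (2 * rho + 1))) by lia.
  rewrite Nat.even_odd; apply tau_odd_eq.
Qed.

Lemma tsw_pair k : (k < rho)%nat ->
  tsw rho g tau (2 * k + 1) = tau + 2 * INR k * PI /\
  tsw rho g tau (2 * k + 2) = tau + tau_e + 2 * INR k * PI.
Proof.
  induction k as [| k IH]; intros Hk.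
  - pose proof (tauj_even 0 ltac:(lia)) as E.
    change (tsw rho g tau 1 = tau + 2 * 0 * PI /\
            tsw rho g tau 1 + tauj rho g tau (2 * 0 + 2) = tau + tau_e + 2 * 0 * PI).
    rewrite E; cbn [tsw]; change (tauj rho g tau 1) with tau; split; ring.
  - destruct (IH ltac:(lia)) as [_ B].
    replace (2 * S k + 1)%nat with (S (2 * k + 2)) by lia.
    replace (2 * S k + 2)%nat with (S (S (2 * k + 2))) by lia.
    cbn [tsw]; rewrite B.
    replace (S (S (2 * k + 2))) with (2 * S k + 2)%nat by lia.
    replace (S (2 * k + 2)) with (2 * S k + 1)%nat by lia.
    rewrite tauj_odd, tauj_even, S_INR by lia; split; ring.
Qed.

Definition Tmin : R := (4 * INR rho * (tau + (INR rho - 1) * PI) - g) / (2 * INR rho - 1).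

Lemma Tmin_eq : Tmin = 2 * tau + tau_e + 2 * (INR rho - 1) * PI.
Proof. unfold Tmin, tau_e, tau_even; field; lra. Qed.

Lemma tsw_2rho : tsw rho g tau (2 * rho) = tau + tau_e + 2 * (INR rho - 1) * PI.
Proof.
  destruct (tsw_pair (rho - 1) ltac:(lia)) as [_ B].
  replace (2 * (rho - 1) + 2)%nat with (2 * rho)%nat in B by lia.
  rewrite B, minus_INR by lia; simpl INR; ring.
Qed.

Lemma tsw_last : tsw rho g tau (S (2 * rho)) = Tmin.
Proof.
  cbn [tsw]; replace (S (2 * rho)) with (2 * rho + 1)%nat by lia.
  unfold tauj at 1; rewrite Nat.eqb_refl, Bool.orb_true_r.
  rewrite tsw_2rho, Tmin_eq; ring.
Qed.

Lemma cos_sin_tau_e :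
  cos tau_e = ((2 * INR rho - cos tau) ^ 2 - sin tau ^ 2) / ((2 * INR rho - cos tau) ^ 2 + sin tau ^ 2) /\
  sin tau_e = 2 * sin tau * (2 * INR rho - cos tau) / ((2 * INR rho - cos tau) ^ 2 + sin tau ^ 2).
Proof.
  pose proof (COS_bound tau); assert (0 < sin tau) by (apply sin_gt_0; lra).
  unfold tau_e; rewrite tau_root; fold alpha.
  rewrite cos_2a_cos, sin_2a, cos_atan, sin_atan.
  assert (Hq : 0 < 1 + alpha²) by (unfold Rsqr; nra).
  assert (Hsq : sqrt (1 + alpha²) * sqrt (1 + alpha²) = 1 + alpha²) by (apply sqrt_sqrt; lra).
  assert (0 < sqrt (1 + alpha²)) by (apply sqrt_lt_R0; lra).
  split.
  - replace (2 * (1 / sqrt (1 + alpha²)) * (1 / sqrt (1 + alpha²)) - 1)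
      with (2 / (sqrt (1 + alpha²) * sqrt (1 + alpha²)) - 1) by (field; lra).
    rewrite Hsq; unfold alpha, Rsqr; field; split; nra.
  - replace (2 * (alpha / sqrt (1 + alpha²)) * (1 / sqrt (1 + alpha²)))
      with (2 * alpha / (sqrt (1 + alpha²) * sqrt (1 + alpha²))) by (field; lra).
    rewrite Hsq; unfold alpha, Rsqr; field; split; nra.
Qed.

(* tau_e is twice the argument of 2 rho - exp(- i tau); with z = exp(i tau) and
   w = exp(i tau_e) this means w = (2 rho - 1/z) / (2 rho - z), i.e.
   z^2 w - 2 rho z w + 2 rho z = 1, whose real and imaginary parts are stated. *)
Lemma tau_e_identity :
  sin (2 * tau + tau_e) + INR rho * (- 2 * sin (tau + tau_e) + 2 * sin tau) = 0 /\
  cos (2 * tau + tau_e) + INR rho * (- 2 * cos (tau + tau_e) + 2 * cos tau) = 1.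
Proof.
  pose proof (COS_bound tau); assert (0 < sin tau) by (apply sin_gt_0; lra).
  assert (0 < 2 * INR rho - cos tau) by lra.
  pose proof (sin2_cos2 tau) as Hsc; unfold Rsqr in Hsc.
  assert (Hs2 : sin tau ^ 2 = 1 - cos tau ^ 2) by nra.
  assert (Hs3 : sin tau ^ 3 = sin tau * (1 - cos tau ^ 2)) by nra.
  assert (Hs4 : sin tau ^ 4 = (1 - cos tau ^ 2) ^ 2) by nra.
  assert (0 < (2 * INR rho - cos tau) ^ 2 + sin tau ^ 2) by nra.
  destruct cos_sin_tau_e as [C S].
  replace (2 * tau) with (tau + tau) by ring.
  repeat rewrite ?sin_plus, ?cos_plus; rewrite C, S.
  split; field_simplify_eq; try lra; rewrite ?Hs4, ?Hs3, ?Hs2; ring.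
Qed.

Definition theta : R := tau + tau_e / 2.

Definition switching (t : R) : R := cos (tau_e / 2) - cos (t - theta).

Lemma switching_even_piece k :
  (forall t, tau + tau_e + 2 * (INR k - 1) * PI <= t <= tau + 2 * INR k * PI ->
     0 <= switching t) /\
  (forall t, tau + tau_e + 2 * (INR k - 1) * PI < t < tau + 2 * INR k * PI ->
     0 < switching t).
Proof.
  pose proof tau_e_range.
  assert (E : forall t, cos (t - theta) = cos (theta + 2 * INR k * PI - t)).
  { intros t; rewrite <- cos_neg, <- (cos_period _ k); f_equal; ring. }
  unfold switching, theta in *; split; intros t Ht; rewrite E.
  - pose proof (cos_le_between (tau_e / 2) (tau + tau_e / 2 + 2 * INR k * PI - t)); lra.
  - pose proof (cos_lt_between (tau_e / 2) (tau + tau_e / 2 + 2 * INR k * PI - t)); lra.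
Qed.

Lemma switching_odd_piece k :
  (forall t, tau + 2 * INR k * PI <= t <= tau + tau_e + 2 * INR k * PI ->
     switching t <= 0) /\
  (forall t, tau + 2 * INR k * PI < t < tau + tau_e + 2 * INR k * PI ->
     switching t < 0).
Proof.
  pose proof tau_e_range.
  unfold switching, theta; split; intros t Ht; rewrite <- (cos_minus_period (t - _) k).
  - pose proof (cos_ge_of_Rabs_le (tau_e / 2) (t - (tau + tau_e / 2) - 2 * INR k * PI)
      ltac:(lra) ltac:(apply Rabs_le; lra)); lra.
  - pose proof (cos_gt_of_Rabs_lt (tau_e / 2) (t - (tau + tau_e / 2) - 2 * INR k * PI)
      ltac:(lra) ltac:(apply Rabs_def1; lra)); lra.
Qed.

Lemma piece_index_cases i : (i <= 2 * rho)%nat ->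
  i = 0%nat \/ (exists k, (k < rho)%nat /\ i = (2 * k + 1)%nat) \/
  (exists k, (k + 1 < rho)%nat /\ i = (2 * k + 2)%nat) \/ i = (2 * rho)%nat.
Proof.
  intros Hi; destruct (Nat.Even_or_Odd i) as [[[| m] Hm] | [m Hm]].
  - left; lia.
  - destruct (Nat.eq_dec (S m) rho); [right; right; right | right; right; left; exists m]; lia.
  - right; left; exists m; lia.
Qed.

Lemma switching_sign i : (i <= 2 * rho)%nat ->
  (forall t, tsw rho g tau i <= t <= tsw rho g tau (S i) -> 0 <= (-1) ^ i * switching t) /\
  (forall t, tsw rho g tau i < t < tsw rho g tau (S i) -> 0 < (-1) ^ i * switching t).
Proof.
  intros Hi; pose proof tau_e_range.
  destruct (piece_index_cases i Hi) as [-> | [[k [Hk ->]] | [[k [Hk ->]] | ->]]].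
  - destruct (switching_even_piece 0) as [E1 E2]; simpl INR in E1, E2.
    change (tsw rho g tau 1) with (0 + tau); rewrite pow_O.
    split; intros t Ht; [apply Rmult_le_pos | apply Rmult_lt_0_compat];
      [lra | apply E1 | lra | apply E2]; simpl tsw in Ht; lra.
  - destruct (switching_odd_piece k) as [E1 E2], (tsw_pair k Hk) as [A B].
    replace (S (2 * k + 1)) with (2 * k + 2)%nat by lia; rewrite A, B.
    replace (2 * k + 1)%nat with (S (2 * k)) by lia; rewrite pow_1_odd.
    split; intros t Ht; [specialize (E1 t Ht) | specialize (E2 t Ht)]; lra.
  - destruct (switching_even_piece (S k)) as [E1 E2].
    destruct (tsw_pair k ltac:(lia)) as [_ B], (tsw_pair (S k) ltac:(lia)) as [A _].
    replace (S (2 * k + 2)) with (2 * S k + 1)%nat by lia; rewrite A, B.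
    replace (2 * k + 2)%nat with (2 * S k)%nat by lia; rewrite pow_1_even, S_INR in *.
    split; intros t Ht; [specialize (E1 t) | specialize (E2 t)]; lra.
  - destruct (switching_even_piece rho) as [E1 E2].
    rewrite tsw_last, tsw_2rho, Tmin_eq, pow_1_even.
    split; intros t Ht; [specialize (E1 t) | specialize (E2 t)]; lra.
Qed.

Local Notation ts := (tsw rho g tau).

Lemma ts_0 : ts 0%nat = 0.
Proof. reflexivity. Qed.

Lemma ts_S k : ts k <= ts (S k).
Proof. left; apply tsw_lt_succ. Qed.

Lemma superpose_pair_step F m T : (m < rho)%nat ->
  superpose ts F (2 * S m) T = superpose ts F (2 * m) T
    - 2 * F (T - tau - 2 * INR m * PI) + 2 * F (T - tau - tau_e - 2 * INR m * PI).
Proof.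
  intros Hm; destruct (tsw_pair m Hm) as [A B].
  replace (2 * S m)%nat with (S (S (2 * m))) by lia; cbn [superpose].
  replace (S (2 * m)) with (2 * m + 1)%nat by lia.
  replace (S (2 * m + 1)) with (2 * m + 2)%nat by lia.
  rewrite A, B; replace (2 * m + 1)%nat with (S (2 * m)) by lia.
  replace (2 * m + 2)%nat with (2 * S m)%nat by lia; rewrite pow_1_odd, pow_1_even.
  replace (T - (tau + 2 * INR m * PI)) with (T - tau - 2 * INR m * PI) by ring.
  replace (T - (tau + tau_e + 2 * INR m * PI)) with (T - tau - tau_e - 2 * INR m * PI) by ring.
  ring.
Qed.

Lemma superpose_id_pairs m T : (m <= rho)%nat ->
  superpose ts (fun x => x) (2 * m) T = T - 2 * INR m * tau_e.
Proof.
  induction m as [| m IH]; intros Hm; [simpl; ring |].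
  rewrite superpose_pair_step, IH, S_INR by lia; ring.
Qed.

Lemma superpose_periodic_pairs F m T :
  (forall x k, F (x - 2 * INR k * PI) = F x) -> (m <= rho)%nat ->
  superpose ts F (2 * m) T = F T + INR m * (- 2 * F (T - tau) + 2 * F (T - tau - tau_e)).
Proof.
  intros HF; induction m as [| m IH]; intros Hm; [simpl; ring |].
  rewrite superpose_pair_step, IH, !HF, S_INR by lia; ring.
Qed.

Definition X1 : R -> R := superpose ts resp1 (2 * rho).
Definition X2 : R -> R := superpose ts resp2 (2 * rho).
Definition X3 : R -> R := superpose ts resp3 (2 * rho).

Lemma X_traj : traj X1 X2 X3.
Proof.
  assert (Hv : forall F, (forall x, x <= 0 -> F x = 0) -> superpose ts F (2 * rho) 0 = 0)
    by (intros; apply superpose_at0; [exact ts_0 | apply ts_S | assumption]).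
  assert (H3 : forall x, x <= 0 -> resp3 x = 0) by (intros; apply Rmax_left; lra).
  unfold traj, X1, X2, X3; repeat split.
  - apply Hv; intros; unfold resp1; rewrite H3, sin_0 by assumption; ring.
  - apply Hv; intros; unfold resp2; rewrite H3, cos_0 by assumption; ring.
  - apply Hv, H3.
  - intros; apply superpose_resp3_lipschitz; [exact ts_0 | apply ts_S].
  - intros t; apply superpose_deriv, resp1_deriv.
  - intros t; replace (- _ + _) with (superpose ts (fun x => resp3 x - resp1 x) (2 * rho) t)
      by (rewrite superpose_minus; ring).
    apply superpose_deriv, resp2_deriv.
Qed.

Lemma X3_on_piece i t : (i <= 2 * rho)%nat -> ts i <= t <= ts (S i) ->
  X3 t = X3 (ts i) + (-1) ^ i * (t - ts i).
Proof. intros; apply superpose_resp3_on_piece; auto using ts_S. Qed.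

Lemma X_control i : (i <= 2 * rho)%nat -> control_on X3 (ts i) (ts (S i)) ((-1) ^ i).
Proof.
  intros Hi t0 Ht0; apply (derivable_pt_lim_affine_near _ (ts i) (ts (S i))); [lra |].
  intros t Ht; rewrite (X3_on_piece i t), (X3_on_piece i t0) by (auto; lra); ring.
Qed.

Lemma Tmin_pos : 0 < Tmin.
Proof. rewrite Tmin_eq; pose proof tau_e_range; nra. Qed.

Lemma X_reaches : reaches g Tmin X1 X2 X3.
Proof.
  assert (Hlast : ts (2 * rho) <= Tmin) by (rewrite <- tsw_last; apply ts_S).
  destruct (superpose_resp_after ts ts_0 ts_S (2 * rho) Tmin Hlast) as [A [B C]].
  rewrite superpose_id_pairs in A, C by lia.
  rewrite (superpose_periodic_pairs sin) in A by (exact sin_minus_period || lia).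
  rewrite (superpose_periodic_pairs cos) in B by (exact cos_minus_period || lia).
  destruct tau_e_identity as [I1 I2].
  assert (HT : forall F : R -> R, (forall x k, F (x - 2 * INR k * PI) = F x) ->
    F Tmin = F (2 * tau + tau_e) /\ F (Tmin - tau) = F (tau + tau_e) /\
    F (Tmin - tau - tau_e) = F tau).
  { intros F HF; rewrite Tmin_eq; replace (INR rho - 1) with (INR (rho - 1))
      by (rewrite minus_INR by lia; reflexivity).
    repeat split; rewrite <- (HF _ (rho - 1)%nat); f_equal; ring. }
  destruct (HT sin sin_minus_period) as [S1 [S2 S3]], (HT cos cos_minus_period) as [C1 [C2 C3]].
  assert (Hg : Tmin - 2 * INR rho * tau_e = g) by (rewrite Tmin_eq; unfold tau_e, tau_even; field; lra).
  unfold reaches, X1, X2, X3; rewrite A, B, C, S1, S2, S3, C1, C2, C3, pow_1_even.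
  pose proof Tmin_pos; repeat split; lra.
Qed.

(* p (t) = (cos (t - theta), - sin (t - theta), k0 - cos (t - theta)) solves
   p' = - A^T p, so formally the pairing has derivative p3 (t) times the
   difference of the controls, which is <= 0 when k0 = cos (tau_e / 2). *)
Definition pairing (x1 x2 x3 : R -> R) (d k0 t : R) : R :=
  cos (t - theta) * (x1 (t - d) - X1 t) - sin (t - theta) * (x2 (t - d) - X2 t)
  + (k0 - cos (t - theta)) * (x3 (t - d) - X3 t).

Lemma pairing_shift x1 x2 x3 d k0 c t :
  pairing x1 x2 x3 d (k0 - c) t = pairing x1 x2 x3 d k0 t - c * (x3 (t - d) - X3 t).
Proof. unfold pairing; ring. Qed.

Lemma pairing_nonincreasing_on_piece x1 x2 x3 d i a b m :
  traj x1 x2 x3 -> (i <= 2 * rho)%nat -> ts i <= a -> a <= b -> b <= ts (S i) -> 0 <= m ->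
  (forall t, a <= t <= b -> m <= (-1) ^ i * switching t) ->
  pairing x1 x2 x3 d (cos (tau_e / 2) - m * (-1) ^ i) b
  <= pairing x1 x2 x3 d (cos (tau_e / 2) - m * (-1) ^ i) a.
Proof.
  intros [_ [_ [_ [Lip [D1 D2]]]]] Hi Ha Hab Hb Hm Hsw.
  destruct X_traj as [_ [_ [_ [XLip [XD1 XD2]]]]].
  apply (nonincreasing_Q_plus_s_y
    (fun t => cos (t - theta) * (x1 (t - d) - X1 t) - sin (t - theta) * (x2 (t - d) - X2 t))
    (fun t => cos (tau_e / 2) - m * (-1) ^ i - cos (t - theta))
    (fun t => - sin (t - theta)) (fun t => x3 (t - d) - X3 t) a b 1 2); try lra.
  - intros t _.
    pose proof (derivable_pt_lim_shift cos theta t _ (derivable_pt_lim_cos _)).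
    pose proof (derivable_pt_lim_shift sin theta t _ (derivable_pt_lim_sin _)).
    pose proof (derivable_pt_lim_minus _ _ t _ _ (derivable_pt_lim_shift _ d t _ (D1 (t - d))) (XD1 t)).
    pose proof (derivable_pt_lim_minus _ _ t _ _ (derivable_pt_lim_shift _ d t _ (D2 (t - d))) (XD2 t)).
    eapply derivable_pt_lim_eq_value;
      [apply derivable_pt_lim_minus; apply derivable_pt_lim_mult; eassumption | cbv beta; ring].
  - intros t _; replace (- - sin (t - theta)) with (0 - - sin (t - theta)) by ring.
    apply derivable_pt_lim_minus;
      [apply derivable_pt_lim_const | apply derivable_pt_lim_shift, derivable_pt_lim_cos].
  - intros t _; rewrite Rabs_Ropp; apply Rabs_le, SIN_bound.
  - intros t t' _ _.
    pose proof (Lip (t - d) (t' - d)) as A; pose proof (XLip t t') as B.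
    replace (t' - d - (t - d)) with (t' - t) in A by ring.
    apply Rabs_le_between in A, B; apply Rabs_le.
    pose proof (Rabs_pos (t' - t)); lra.
  - intros t h Ht Hh Hth.
    pose proof (Lip (t - d) (t + h - d)) as A.
    replace (t + h - d - (t - d)) with h in A by ring.
    rewrite (Rabs_right h) in A by lra; apply Rabs_le_between in A.
    pose proof (Hsw t ltac:(lra)) as S; unfold switching in S.
    rewrite (X3_on_piece i (t + h)), (X3_on_piece i t) by (auto; lra).
    destruct (pow_m1_cases i) as [U | U]; rewrite U in *.
    + assert (0 <= cos (tau_e / 2) - m * 1 - cos (t - theta)) by lra.
      assert (x3 (t + h - d) - x3 (t - d) <= h) by lra. nra.
    + assert (cos (tau_e / 2) - m * -1 - cos (t - theta) <= 0) by lra.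
      assert (- h <= x3 (t + h - d) - x3 (t - d)) by lra. nra.
Qed.

Lemma pairing_nonincreasing x1 x2 x3 d : traj x1 x2 x3 ->
  forall a b, 0 <= a -> a <= b -> b <= Tmin ->
  pairing x1 x2 x3 d (cos (tau_e / 2)) b <= pairing x1 x2 x3 d (cos (tau_e / 2)) a.
Proof.
  intros Htr a b Ha Hab Hb; rewrite <- tsw_last in Hb.
  apply (nonincreasing_across_pieces ts ts_0 _ (2 * rho)); auto.
  intros i Hi a' b' H1 H2 H3.
  replace (cos (tau_e / 2)) with (cos (tau_e / 2) - 0 * (-1) ^ i) by ring.
  apply pairing_nonincreasing_on_piece; auto; try lra.
  intros t Ht; apply (proj1 (switching_sign i Hi)); lra.
Qed.

Lemma pairing_strict_near x1 x2 x3 d i t0 :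
  traj x1 x2 x3 -> (i <= 2 * rho)%nat -> ts i < t0 < ts (S i) ->
  exists dl m, 0 < dl /\ 0 < m /\ ts i <= t0 - dl /\ t0 + dl <= ts (S i) /\
    forall a b, t0 - dl <= a -> a <= b -> b <= t0 + dl ->
      pairing x1 x2 x3 d (cos (tau_e / 2) - m * (-1) ^ i) b
      <= pairing x1 x2 x3 d (cos (tau_e / 2) - m * (-1) ^ i) a.
Proof.
  intros Htr Hi Ht0.
  pose proof (proj2 (switching_sign i Hi) t0 Ht0) as Hs.
  set (m := (-1) ^ i * switching t0 / 2).
  set (dl := Rmin m (Rmin (t0 - ts i) (ts (S i) - t0)) / 2).
  pose proof (Rmin_l m (Rmin (t0 - ts i) (ts (S i) - t0))).
  pose proof (Rmin_r m (Rmin (t0 - ts i) (ts (S i) - t0))).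
  pose proof (Rmin_l (t0 - ts i) (ts (S i) - t0)).
  pose proof (Rmin_r (t0 - ts i) (ts (S i) - t0)).
  assert (0 < Rmin m (Rmin (t0 - ts i) (ts (S i) - t0)))
    by (apply Rmin_pos; [| apply Rmin_pos]; unfold m; lra).
  exists dl, m; unfold dl; repeat split; [lra | unfold m; lra | lra | lra |].
  intros a b Ha Hab Hb; apply pairing_nonincreasing_on_piece; auto; try lra.
  intros t Ht.
  pose proof (cos_lipschitz (t0 - theta) (t - theta)) as C.
  replace (t0 - theta - (t - theta)) with (t0 - t) in C by ring.
  assert (Rabs (t0 - t) <= m) by (apply Rabs_le; lra).
  apply Rabs_le_between in C; unfold m, switching in *.
  destruct (pow_m1_cases i) as [U | U]; rewrite U in *; lra.
Qed.

Lemma X_at0 : X1 0 = 0 /\ X2 0 = 0 /\ X3 0 = 0.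
Proof. destruct X_traj as [A [B [C _]]]; auto. Qed.

Lemma pairing_at_target x1 x2 x3 d :
  x1 (Tmin - d) = g -> x2 (Tmin - d) = 0 -> x3 (Tmin - d) = g ->
  pairing x1 x2 x3 d (cos (tau_e / 2)) Tmin = 0.
Proof.
  destruct X_reaches as [_ [R1 [R2 R3]]]; intros A B C.
  unfold pairing; rewrite A, B, C, R1, R2, R3; ring.
Qed.

Lemma pairing_rest_negative d : 0 < d -> d <= Tmin ->
  pairing (fun _ => 0) (fun _ => 0) (fun _ => 0) 0 (cos (tau_e / 2)) d < 0.
Proof.
  intros Hd HdT; set (Wz := pairing _ _ _ 0 (cos (tau_e / 2))).
  assert (Hts1 : ts 1 = tau) by (change (0 + tau = tau); ring).
  assert (HX3 : forall t, 0 <= t <= tau -> X3 t = t).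
  { intros t Ht; rewrite (X3_on_piece 0 t); [| lia | rewrite Hts1, ts_0; lra].
    rewrite ts_0, (proj2 (proj2 X_at0)), pow_O; ring. }
  assert (HW0 : Wz 0 = 0)
    by (unfold Wz, pairing; destruct X_at0 as [A [B C]]; rewrite A, B, C; ring).
  set (t0 := Rmin d tau / 2).
  assert (Ht0 : 0 < t0 /\ 2 * t0 <= d /\ 2 * t0 <= tau).
  { pose proof (Rmin_l d tau); pose proof (Rmin_r d tau).
    pose proof (Rmin_pos d tau Hd (proj1 tau_range)); unfold t0; lra. }
  clearbody t0.
  destruct (pairing_strict_near _ _ _ 0 0 t0 zero_traj ltac:(lia)
              ltac:(rewrite Hts1, ts_0; lra)) as [dl [m [Hdl [Hm [_ [_ Hw]]]]]].
  set (b := t0 + Rmin dl t0).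
  assert (Hb : t0 < b <= t0 + dl /\ b <= 2 * t0).
  { pose proof (Rmin_l dl t0); pose proof (Rmin_r dl t0).
    pose proof (Rmin_pos dl t0 Hdl (proj1 Ht0)); unfold b; lra. }
  clearbody b.
  assert (Hab := Hw t0 b ltac:(lra) ltac:(lra) ltac:(lra)).
  rewrite pow_O, Rmult_1_r, !pairing_shift, !HX3 in Hab by lra; fold Wz in Hab.
  pose proof (pairing_nonincreasing _ _ _ 0 zero_traj 0 t0 ltac:(lra) ltac:(lra) ltac:(lra)) as M1.
  pose proof (pairing_nonincreasing _ _ _ 0 zero_traj b d ltac:(lra) ltac:(lra) HdT) as M2.
  fold Wz in M1, M2; nra.
Qed.

Lemma Tmin_minimal T x1 x2 x3 : traj x1 x2 x3 -> reaches g T x1 x2 x3 -> Tmin <= T.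
Proof.
  intros Htr [HT [R1 [R2 R3]]]; apply Rnot_lt_le; intros HTm.
  set (d := Tmin - T).
  assert (Hend := pairing_at_target x1 x2 x3 d).
  replace (Tmin - d) with T in Hend by (unfold d; ring).
  specialize (Hend R1 R2 R3).
  pose proof (pairing_nonincreasing x1 x2 x3 d Htr d Tmin ltac:(unfold d; lra)
    ltac:(unfold d; lra) ltac:(lra)) as Hmono.
  destruct Htr as [Z1 [Z2 [Z3 _]]].
  replace (pairing x1 x2 x3 d (cos (tau_e / 2)) d)
    with (pairing (fun _ => 0) (fun _ => 0) (fun _ => 0) 0 (cos (tau_e / 2)) d) in Hmono
    by (unfold pairing; rewrite Rminus_diag, Z1, Z2, Z3; ring).
  pose proof (pairing_rest_negative d ltac:(unfold d; lra) ltac:(unfold d; lra)); lra.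
Qed.

Lemma X_control_unique x1 x2 x3 : traj x1 x2 x3 -> reaches g Tmin x1 x2 x3 ->
  forall i, (i <= 2 * rho)%nat -> control_on x3 (ts i) (ts (S i)) ((-1) ^ i).
Proof.
  intros Htr [_ [R1 [R2 R3]]] i Hi t0 Ht0.
  set (Wx := pairing x1 x2 x3 0 (cos (tau_e / 2))).
  assert (Hzero : forall t, 0 <= t <= Tmin -> Wx t = 0).
  { assert (W0 : Wx 0 = 0).
    { destruct Htr as [Z1 [Z2 [Z3 _]]], X_at0 as [A [B C]].
      unfold Wx, pairing; rewrite Rminus_0_r, A, B, C, Z1, Z2, Z3; ring. }
    assert (WT : Wx Tmin = 0) by (apply pairing_at_target; rewrite Rminus_0_r; auto).
    intros t Ht.
    pose proof (pairing_nonincreasing x1 x2 x3 0 Htr 0 t ltac:(lra) ltac:(lra) ltac:(lra)) as M1.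
    pose proof (pairing_nonincreasing x1 x2 x3 0 Htr t Tmin ltac:(lra) ltac:(lra) ltac:(lra)) as M2.
    fold Wx in M1, M2; lra. }
  assert (Hpiece : 0 <= ts i /\ ts (S i) <= Tmin).
  { rewrite <- ts_0, <- tsw_last; split; apply ts_le; auto using ts_S; lia. }
  destruct (pairing_strict_near x1 x2 x3 0 i t0 Htr Hi Ht0) as [dl [m [Hdl [Hm [Hl [Hr Hw]]]]]].
  assert (Hslope : forall a b, t0 - dl <= a -> a <= b -> b <= t0 + dl ->
            x3 b - x3 a = (-1) ^ i * (b - a)).
  { intros a b Ha Hab Hb.
    pose proof (Hw a b Ha Hab Hb) as H; rewrite !pairing_shift, !Rminus_0_r in H; fold Wx in H.
    rewrite (Hzero a), (Hzero b), (X3_on_piece i a), (X3_on_piece i b) in H by (auto; lra).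
    destruct Htr as [_ [_ [_ [Lip _]]]]; pose proof (Lip a b) as L.
    rewrite (Rabs_right (b - a)) in L by lra; apply Rabs_le_between in L.
    destruct (pow_m1_cases i) as [U | U]; rewrite U in *; nra. }
  apply (derivable_pt_lim_affine_near _ (t0 - dl) (t0 + dl)); [lra |].
  intros t Ht; destruct (Rle_or_lt t0 t).
  - rewrite <- (Hslope t0 t) by lra; ring.
  - pose proof (Hslope t t0 ltac:(lra) ltac:(lra) ltac:(lra)); lra.
Qed.
End OptimalControl.

Lemma reach_time_lower_bound g T x1 x2 x3 :
  traj x1 x2 x3 -> reaches g T x1 x2 x3 -> g <= T.
Proof.
  intros [_ [_ [Z3 [Lip _]]]] [HT [_ [_ R3]]].
  pose proof (Lip 0 T) as L; rewrite Z3, R3, !Rminus_0_r, (Rabs_right T) in L by lra.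
  apply Rabs_le_between in L; lra.
Qed.

Lemma control_forced_at_lower_bound T x1 x2 x3 :
  traj x1 x2 x3 -> x3 T = T -> control_on x3 0 T 1.
Proof.
  intros [_ [_ [Z3 [Lip _]]]] R3 t0 Ht0.
  assert (Hid : forall t, 0 <= t <= T -> x3 t = t).
  { intros t Ht; pose proof (Lip 0 t) as A; pose proof (Lip t T) as B.
    rewrite Z3, !Rminus_0_r, (Rabs_right t) in A by lra.
    rewrite R3, (Rabs_right (T - t)) in B by lra.
    apply Rabs_le_between in A, B; lra. }
  apply (derivable_pt_lim_affine_near _ 0 T); [lra |].
  intros t Ht; rewrite !Hid by lra; ring.
Qed.

Lemma full_thrust_traj :
  traj (fun t => t - sin t) (fun t => 1 - cos t) (fun t => t).
Proof.
  unfold traj; repeat split; intros.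
  - rewrite sin_0; ring.
  - rewrite cos_0; ring.
  - lra.
  - apply is_derive_Reals; auto_derive; [easy | ring].
  - apply is_derive_Reals; auto_derive; [easy | ring].
Qed.

Lemma full_thrust_reaches rho : (1 <= rho)%nat ->
  reaches (2 * INR rho * PI) (2 * INR rho * PI)
    (fun t => t - sin t) (fun t => 1 - cos t) (fun t => t).
Proof.
  intros Hrho; pose proof (INR_ge1 rho Hrho); pose proof PI_RGT_0.
  pose proof (sin_period 0 rho) as S; pose proof (cos_period 0 rho) as C.
  rewrite Rplus_0_l, sin_0 in S; rewrite Rplus_0_l, cos_0 in C.
  unfold reaches; repeat split; nra.
Qed.

Theorem theorem4 (g : R) (hg : 0 < g) :
  (* (i) *)
  (forall rho : nat, (1 <= rho)%nat ->
     2 * (INR rho - 1) * PI < g < 2 * INR rho * PI ->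
     exists tau : R,
       (0 < tau < PI /\ tau_eq rho g tau /\
        (forall tau' : R, 0 < tau' < PI -> tau_eq rho g tau' -> tau' = tau)) /\
       let Tmin := (4 * INR rho * (tau + (INR rho - 1) * PI) - g) / (2 * INR rho - 1) in
       (* exactly 2 rho switchings: all interval lengths positive *)
       (forall j : nat, (1 <= j <= 2 * rho + 1)%nat ->
          tsw rho g tau (j - 1) < tsw rho g tau j) /\
       tsw rho g tau (2 * rho + 1) = Tmin /\
       (* the bang-bang control is admissible and steers to the target at Tmin *)
       (exists x1 x2 x3 : R -> R,
          traj x1 x2 x3 /\ reaches g Tmin x1 x2 x3 /\
          (forall j : nat, (1 <= j <= 2 * rho + 1)%nat ->
             control_on x3 (tsw rho g tau (j - 1)) (tsw rho g tau j) ((-1) ^ (j - 1)))) /\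
       (* Tmin is the minimum time *)
       (forall (T : R) (x1 x2 x3 : R -> R),
          traj x1 x2 x3 -> reaches g T x1 x2 x3 -> Tmin <= T) /\
       (* uniqueness of the optimal control *)
       (forall x1 x2 x3 : R -> R,
          traj x1 x2 x3 -> reaches g Tmin x1 x2 x3 ->
          forall j : nat, (1 <= j <= 2 * rho + 1)%nat ->
            control_on x3 (tsw rho g tau (j - 1)) (tsw rho g tau j) ((-1) ^ (j - 1)))) /\
  (* (ii) *)
  (forall rho : nat, (1 <= rho)%nat -> g = 2 * INR rho * PI ->
     (exists x1 x2 x3 : R -> R,
        traj x1 x2 x3 /\ reaches g (2 * INR rho * PI) x1 x2 x3 /\
        control_on x3 0 (2 * INR rho * PI) 1) /\
     (forall (T : R) (x1 x2 x3 : R -> R),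
        traj x1 x2 x3 -> reaches g T x1 x2 x3 -> 2 * INR rho * PI <= T) /\
     (forall x1 x2 x3 : R -> R,
        traj x1 x2 x3 -> reaches g (2 * INR rho * PI) x1 x2 x3 ->
        control_on x3 0 (2 * INR rho * PI) 1)).
Proof.
  split.
  - intros rho Hrho Hg.
    destruct (tau_exists_unique rho g Hrho Hg) as [tau [Htau [Hroot Huniq]]].
    exists tau; split; [auto |]; intros Tm; change Tm with (Tmin rho g tau).
    assert (Hj : forall j, (1 <= j <= 2 * rho + 1)%nat -> j = S (j - 1)) by (intros; lia).
    split; [| split; [| split; [| split]]].
    + intros j Hj'; rewrite (Hj j Hj') at 2; apply tsw_lt_succ; assumption.
    + replace (2 * rho + 1)%nat with (S (2 * rho)) by lia; apply tsw_last; assumption.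
    + exists (X1 rho g tau), (X2 rho g tau), (X3 rho g tau).
      split; [apply X_traj; auto |]; split; [apply X_reaches; auto |].
      intros j Hj'; rewrite (Hj j Hj') at 2; apply X_control; auto; lia.
    + intros; eapply Tmin_minimal; eauto.
    + intros x1 x2 x3 Htr Hre j Hj'; rewrite (Hj j Hj') at 2.
      eapply X_control_unique; eauto; lia.
  - intros rho Hrho ->; pose proof (INR_ge1 rho Hrho); pose proof PI_RGT_0.
    split; [| split].
    + exists (fun t => t - sin t), (fun t => 1 - cos t), (fun t => t).
      split; [apply full_thrust_traj |].
      split; [apply full_thrust_reaches; assumption |].
      apply (control_forced_at_lower_bound _ _ _ _ full_thrust_traj); reflexivity.
    + apply reach_time_lower_bound.
    + intros x1 x2 x3 Htr [_ [_ [_ R3]]].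
      apply (control_forced_at_lower_bound _ x1 x2 x3); assumption.
Qed.
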